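(* Let $f$ be a perfect $2$-coloring of $H(n,q)$ with quotient matrix $\begin{pmatrix} a & b\\ c& d\end{pmatrix}$ such that the set of vertices of color $1$ can be partitioned into $k$-faces. If there exists a $1$-perfect code in $H(q+1,q)$, then there exist perfect $(q+1)$-colorings $g'$ and $g''$ of $H(qn,q)$ with quotient matrices $T'=(t'_{i,j})$ and $T''=(t''_{i,j})$, $i,j\in\{1,\dots,q+1\}$, where for $1\le i,j\le q$: $t'_{i,i}=a-k(q-1)$, $t'_{i,j}=a+k$ ($i\ne j$), $t''_{i,i}=a+k(q-1)^2$, $t''_{i,j}=a-k(q-1)$ ($i\ne j$); and in both matrices the entries $(i,q+1)$ for $i\le q$ equal $qb$, the entries $(q+1,j)$ for $j\le q$ equal $c$, and the entry $(q+1,q+1)$ equals $qd$.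
   Context: The Hamming graph $H(n,q)$ has vertex set $\mathbb{Z}_q^n$, two vertices adjacent iff they differ in exactly one coordinate. A $k$-face of $H(n,q)$ is a set of vertices obtained by fixing the values of $n-k$ coordinates and letting the remaining $k$ coordinates range over $\mathbb{Z}_q$. A perfect $r$-coloring is a surjective map from the vertex set onto $\{1,\dots,r\}$ such that every vertex of color $i$ has exactly $s_{i,j}$ neighbours of color $j$; $(s_{i,j})$ is its quotient matrix. A $1$-perfect code in $H(n,q)$ is a set $C$ of vertices such that every radius-$1$ Hamming ball contains exactly one element of $C$. *)

From HB Require Import structures.
From mathcomp Require Import all_boot all_order all_algebra.
Set Implicit Arguments. Unset Strict Implicit. Unset Printing Implicit Defensive.
Import Order.TTheory GRing.Theory Num.Theory.

(* Vertices of the Hamming graph H(n,q): words of length n over the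
   alphabet 'I_q = {0,..,q-1} (identified with Z_q; no group structure
   is needed). *)
Definition hvert (n q : nat) := {ffun 'I_n -> 'I_q}.

Definition hdist n q (x y : hvert n q) : nat := #|[set i | x i != y i]|.

Definition hadj n q (x y : hvert n q) : bool := hdist x y == 1%N.

Definition is_face n q (k : nat) (F : {set hvert n q}) : Prop :=
  exists (S : {set 'I_n}) (v : hvert n q),
    #|S| = k /\ F = [set x : hvert n q | [forall i, (i \notin S) ==> (x i == v i)]].

(* perfect r-coloring f with quotient matrix M (colors 1..r are 'I_r) *)
Definition perfect_coloring n q r (f : hvert n q -> 'I_r)
    (M : 'I_r -> 'I_r -> int) : Prop :=
  (forall j : 'I_r, exists x, f x = j) /\
  (forall (x : hvert n q) (j : 'I_r),
      (#|[set y | hadj x y & f y == j]| : int) = M (f x) j).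

Definition one_perfect_code n q (C : {set hvert n q}) : Prop :=
  forall x : hvert n q, #|[set y in C | hdist x y <= 1]| = 1%N.

(* the 2x2 matrix ((a b) (c d)); color 1 = index 0, color 2 = index 1 *)
Definition mat2 (a b c d : int) : 'I_2 -> 'I_2 -> int :=
  fun i j => if val i == 0%N then (if val j == 0%N then a else b)
             else (if val j == 0%N then c else d).

(* (q+1)x(q+1) matrix: entries (i,j), i,j <= q (0-based i,j < q) are
   dg on the diagonal and off outside; column q+1 is cl, row q+1 is rw,
   corner is cr. *)
Definition qmat (q : nat) (dg off cl rw cr : int) : 'I_q.+1 -> 'I_q.+1 -> int :=
  fun i j =>
    if (val i < q)%N then
      (if (val j < q)%N then (if i == j then dg else off) else cl)
    else (if (val j < q)%N then rw else cr).
Arguments qmat q dg off cl rw cr : clear implicits.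

From HB Require Import structures.
From mathcomp Require Import all_boot all_order all_algebra.
From mathcomp Require Import zify.
Import GRing.Theory.
Set Implicit Arguments. Unset Strict Implicit. Unset Printing Implicit Defensive.

(* Read a vertex x of H(qn,q) as n blocks x_1, ..., x_n in H(q,q).  A 1-perfect
   code in H(q+1,q) meets every 2-face; this yields maps lam, psi : H(q,q) -> Z_q
   such that two vertices at distance at most 2 with equal lam differ in psi, so
   that lam is a bijection on every line.  Applying lam blockwise maps H(qn,q)
   onto H(n,q), every neighbour of the image being reached through exactly q
   neighbours of x, one for each coordinate of the changed block.  A vertex over
   colour 2 gets colour q+1; a vertex over colour 1 whose face has direction set S
   gets the colour sum_(i notin S) psi(x_i) mod q, plus sum_(i in S) lam(x_i) for g'.
   Moving in a block outside S to a vertex over colour 1 produces each colour < q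
   exactly once, because psi is injective on those q neighbours; moving in a block
   of S stays in the face and keeps the colour for g'', while for g' it shifts the
   colour by the change of lam. *)

Lemma sum_widen_inj q (h : 'I_q -> 'I_q) (c : 'I_q.+1) : injective h ->
  \sum_j (widen_ord (leqnSn q) (h j) == c : nat) = (c < q).
Proof.
move=> h_inj; transitivity (\sum_u (widen_ord (leqnSn q) u == c : nat)).
  by rewrite [RHS](reindex_inj h_inj).
have [cq|qc] := ltnP c q.
  rewrite (bigD1 (Ordinal cq)) //= (_ : widen_ord _ _ == c); last exact/eqP/val_inj.
  rewrite big1 // => u /negbTE uc; apply/eqP; rewrite eqb0.
  by apply: contraFN uc => /eqP wu; apply/eqP/val_inj; rewrite /= -wu.
rewrite big1 // => u _; apply/eqP; rewrite eqb0; apply: contraTN qc => /eqP <-.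
by rewrite -ltnNge /=.
Qed.

Section Hamming.
Variables n q : nat.
Implicit Types x y : hvert n q.

Definition upd x (p : 'I_n) (v : 'I_q) : hvert n q :=
  [ffun i => if i == p then v else x i].

Lemma updE x p v i : upd x p v i = if i == p then v else x i.
Proof. by rewrite ffunE. Qed.

Lemma upd_upd x p v w : upd (upd x p v) p w = upd x p w.
Proof. by apply/ffunP=> i; rewrite !updE; case: eqP. Qed.

Lemma upd_id x p : upd x p (x p) = x.
Proof. by apply/ffunP=> i; rewrite updE; case: eqP => // ->. Qed.

Lemma hdistE x y : hdist x y = \sum_i (x i != y i : nat).
Proof.
rewrite /hdist -sum1dep_card big_mkcond /=.
by apply: eq_bigr => i _; case: (x i != y i).
Qed.

Lemma hdist_le_card x y (A : {set 'I_n}) :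
  (forall i, i \notin A -> x i = y i) -> hdist x y <= #|A|.
Proof.
move=> xyA; apply/subset_leq_card/subsetP=> i; rewrite inE; apply: contraR.
by move/xyA=> ->.
Qed.

Lemma hdist_eq0 x y : hdist x y = 0 -> x = y.
Proof.
move/cards0_eq=> D0; apply/ffunP=> i; apply/eqP; apply: contraT=> xy.
by move: (in_set0 i); rewrite -D0 inE xy.
Qed.

Lemma upd_hadj x p v : v != x p -> hadj x (upd x p v).
Proof.
move=> vx; rewrite /hadj /hdist (_ : [set i | _] = [set p]) ?cards1 //.
apply/setP=> i; rewrite !inE updE; case: (eqVneq i p) => [->|_].
  by rewrite eq_sym vx.
by rewrite eqxx.
Qed.

Lemma hadj_upd x y : hadj x y -> exists2 p, y = upd x p (y p) & y p != x p.
Proof.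
rewrite /hadj /hdist => /cards1P [p D]; have: p \in [set p] by rewrite inE.
rewrite -D inE eq_sym => ypx; exists p => //; apply/ffunP=> i; rewrite updE.
case: eqP => [-> //|/eqP ip]; apply/eqP; apply: contraT => xyi.
have: i \in [set p] by rewrite -D inE eq_sym.
by rewrite inE (negbTE ip).
Qed.

Lemma sum_adj x (F : hvert n q -> nat) :
  \sum_(y | hadj x y) F y = \sum_p \sum_(v | v != x p) F (upd x p v).
Proof.
rewrite pair_big_dep /= -(big_imset (fun y => F y) (h := fun pv => upd x pv.1 pv.2)) /=.
  apply: eq_bigl => y; apply/idP/imsetP => [/hadj_upd [p yE yp]|[[p v]]].
    by exists (p, y p).
  by move=> vx ->; exact: upd_hadj.
move=> [p v] [p' v'] vx _ /= E; have := congr1 (fun y => y p) E.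
rewrite !updE eqxx; case: (eqVneq p p') => [<- <- //|_ vE].
by move: vx; rewrite unfold_in /= vE eqxx.
Qed.

Lemma card_adj x (Q : pred (hvert n q)) :
  #|[set y | hadj x y & Q y]| = \sum_p \sum_(v | v != x p) (Q (upd x p v) : nat).
Proof.
rewrite -(sum_adj x (fun y => (Q y : nat))) -sum1dep_card big_mkcondr /=.
by apply: eq_bigr => y _; case: (Q y).
Qed.

Lemma hvert_neqP x y : x != y -> exists i, x i != y i.
Proof.
move=> xy; apply/existsP; apply: contraR xy; rewrite negb_exists => /forallP E.
by apply/eqP/ffunP => i; apply/eqP; have := E i; rewrite negbK.
Qed.

Lemma hvert_neq_gt1 x y : x != y -> 1 < q.
Proof.
move=> /hvert_neqP [i]; have := ltn_ord (x i); have := ltn_ord (y i).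
by rewrite -val_eqE /=; lia.
Qed.

Definition face (S : {set 'I_n}) (v : hvert n q) : {set hvert n q} :=
  [set z : hvert n q | [forall i, (i \notin S) ==> (z i == v i)]].

Lemma face_upd S v x m t : x \in face S v -> t != x m ->
  (upd x m t \in face S v) = (m \in S).
Proof.
rewrite !inE => /forall_inP xv tx; case: (boolP (m \in S)) => mS.
  apply/forall_inP => i iS; rewrite updE; case: (eqVneq i m) => [im|_]; last exact: xv.
  by move: iS; rewrite im mS.
apply/forall_inP => /(_ m mS); rewrite updE eqxx => /eqP tv.
by move: tx; rewrite tv (eqP (xv m mS)) eqxx.
Qed.

Definition dirs_of k (F : {set hvert n q}) : {set 'I_n} :=
  odflt set0 [pick S : {set 'I_n} | [exists v, (#|S| == k) && (F == face S v)]].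

Lemma dirs_ofP k F : is_face k F -> #|dirs_of k F| = k /\ exists v, F = face (dirs_of k F) v.
Proof.
move=> [S [v [Sk Fv]]]; rewrite /dirs_of.
case: pickP => [S' /existsP [v' /andP [/eqP ? /eqP ?]]|no].
  by split; [|exists v'].
by move: (no S) => /existsP []; exists v; rewrite Sk Fv !eqxx.
Qed.

End Hamming.

Section PerfectCode.
Variables (N q : nat) (C : {set hvert N q}).
Hypothesis C_perfect : one_perfect_code C.

Lemma perfect_code_ball x : exists2 c, c \in C & hdist x c <= 1.
Proof.
have /eqP/cards1P [c Bc] := C_perfect x.
have: c \in [set y in C | hdist x y <= 1] by rewrite Bc set11.
by rewrite inE => /andP [cC xc]; exists c.
Qed.

Lemma perfect_code_ball_uniq x c1 c2 : c1 \in C -> c2 \in C ->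
  hdist x c1 <= 1 -> hdist x c2 <= 1 -> c1 = c2.
Proof.
move=> c1C c2C xc1 xc2; have /eqP/cards1P [c Bc] := C_perfect x.
have inB c' : c' \in C -> hdist x c' <= 1 -> c' = c.
  by move=> c'C xc'; apply/set1P; rewrite -Bc inE c'C.
by rewrite (inB c1) // (inB c2).
Qed.

Lemma perfect_code_eq c1 c2 : c1 \in C -> c2 \in C -> hdist c1 c2 <= 2 -> c1 = c2.
Proof.
move=> c1C c2C d12; apply/eqP; apply: contraT => c12.
have [p c12p] := hvert_neqP c12.
pose w := upd c1 p (c2 p).
have wc1 : hdist w c1 <= 1.
  rewrite -(cards1 p); apply: hdist_le_card => i; rewrite inE updE => /negbTE ->.
  by [].
have wc2 : hdist w c2 <= 1.
  have D := cardsD1 p [set i | c1 i != c2 i]; rewrite inE c12p in D.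
  apply: leq_trans (hdist_le_card (A := [set i | c1 i != c2 i] :\ p) _) _.
    move=> i; rewrite !inE updE negb_and negbK; case: (eqVneq i p) => [->|_] //=.
    by rewrite negbK => /eqP.
  by move: d12; rewrite /hdist D add1n ltnS.
by move: c12; rewrite (perfect_code_ball_uniq c1C c2C wc1 wc2) eqxx.
Qed.

Lemma perfect_code_meets_2face (a b : 'I_N) (v : hvert N q) : a != b -> N <= q.+1 ->
  exists2 c, c \in C & forall i, i \notin [set a; b] -> c i = v i.
Proof.
(* Otherwise the vertices of the line through v in direction b are covered by
   codewords adjacent to them in pairwise distinct directions outside {a, b}. *)
move=> ab N_le; pose inface c := [forall i in ~: [set a; b], c i == v i].
have [/exists_inP [c cC /forall_inP cv]|noC] := boolP [exists c in C, inface c].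
  by exists c => // i iab; apply/eqP/cv; rewrite inE.
have notin c : c \in C -> (forall i, i \notin [set a; b] -> c i = v i) -> False.
  move=> cC cv; move/exists_inP: noC; apply; exists c => //.
  by apply/forall_inP => i; rewrite inE => /cv ->.
pose w r := upd v b r.
have /fin_all_exists [c cP] : forall r : 'I_q, exists c, c \in C /\ hdist (w r) c <= 1.
  by move=> r; have [c] := perfect_code_ball (w r); exists c.
have adj r : hadj (w r) (c r).
  have [cC wc] := cP r; rewrite /hadj eqn_leq wc lt0n; apply/eqP => /hdist_eq0 wcE.
  apply: (notin (c r)); rewrite // -wcE => i.
  by rewrite !inE negb_or updE => /andP [_ /negbTE ->].
have /fin_all_exists [p pP] :
    forall r : 'I_q, exists p, c r = upd (w r) p (c r p) /\ c r p != w r p.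
  by move=> r; have [p] := hadj_upd (adj r); exists p.
have cE r i : i != p r -> c r i = w r i.
  by case: (pP r) => cE _ ip; rewrite {1}cE updE (negbTE ip).
have p_ab r : p r \notin [set a; b].
  apply/negP => pab; apply: (notin (c r)); first by case: (cP r).
  move=> i iab; rewrite cE; last by apply: contraNneq iab => ->.
  by rewrite updE; move: iab; rewrite !inE negb_or => /andP [_ /negbTE ->].
have cb r : c r b = r.
  by rewrite cE ?updE ?eqxx //; apply: contraNneq (p_ab r) => <-; rewrite !inE eqxx orbT.
have p_inj : injective p.
  move=> r r' prr; rewrite -(cb r) -(cb r'); suff -> : c r = c r' by [].
  apply: perfect_code_eq; [by case: (cP r) | by case: (cP r') |].
  apply: leq_trans (hdist_le_card (A := [set p r; b]) _) _.
    move=> i; rewrite !inE negb_or => /andP [ipr ib].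
    by rewrite cE // cE -?prr // !updE (negbTE ib).
  by rewrite cards2; case: (_ != _).
have : p @: [set: 'I_q] \subset ~: [set a; b].
  by apply/subsetP => _ /imsetP [r _ ->]; rewrite inE p_ab.
move/subset_leq_card; rewrite card_imset // cardsT card_ord.
have := cardsC [set a; b]; rewrite cards2 ab card_ord.
by have := ltn_ord (v a); lia.
Qed.

End PerfectCode.

Definition separating q (lam psi : hvert q q -> 'I_q) : Prop :=
  forall y y', lam y = lam y' -> hdist y y' + (psi y != psi y') <= 2 -> y = y'.

Section CodeToSeparating.
Variable q' : nat.
Local Notation q := q'.+1.
Variable C : {set hvert q.+1 q}.
Hypothesis C_perfect : one_perfect_code C.

(* The value put in the last coordinate is irrelevant: that coordinate is free
   in the 2-face used below. *)
Definition extend_vert (y : hvert q q) : hvert q.+1 q :=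
  [ffun p => if unlift ord_max p is Some p' then y p' else ord0].

Local Notation a := (lift ord_max (ord0 : 'I_q)).

Lemma perfect_code_separating : exists lam psi : hvert q q -> 'I_q, separating lam psi.
Proof.
have /fin_all_exists [cw cwP] : forall y : hvert q q,
    exists c, c \in C /\ forall i, i \notin [set a; ord_max] -> c i = extend_vert y i.
  move=> y.
  have [||c] := perfect_code_meets_2face C_perfect (a := a) (b := ord_max) (extend_vert y).
  - by rewrite eq_sym neq_lift.
  - by [].
  by exists c.
have cw_lift y i : i != ord0 -> cw y (lift ord_max i) = y i.
  move=> i0; rewrite (cwP y).2 ?ffunE ?liftK //.
  rewrite !inE negb_or !(inj_eq lift_inj) i0 /=.
  by apply: contraNneq (neq_lift ord_max i) => ->.
(* Measuring lam relative to [y ord0] makes it injective along coordinate 0 too. *)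
exists (fun y => cw y a - y ord0)%R, (fun y => cw y ord_max) => y y' /= lamE d.
have cw_eq i : y i = y' i -> cw y (lift ord_max i) = cw y' (lift ord_max i).
  case: (eqVneq i ord0) => [-> y0|i0 yi]; last by rewrite !cw_lift.
  by rewrite -(subrK (y ord0) (cw y a)) lamE y0 subrK.
have cwE : cw y = cw y'.
  apply: (perfect_code_eq C_perfect (cwP y).1 (cwP y').1); apply: leq_trans d.
  rewrite !hdistE big_ord_recr /= leq_add2r; apply: leq_sum => i _.
  rewrite (_ : widen_ord _ i = lift ord_max i); last exact/val_inj/esym/lift_max.
  by case: (eqVneq (y i) (y' i)) => [/cw_eq ->|_]; rewrite ?eqxx ?leq_b1.
apply/ffunP => i; case: (eqVneq i ord0) => [->|i0]; last by rewrite -!cw_lift // cwE.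
by move: lamE; rewrite cwE => /addrI /oppr_inj.
Qed.

End CodeToSeparating.

Section Blocks.
Variables n q' : nat.
Local Notation q := q'.+1.
Variables lam psi : hvert q q -> 'I_q.
Hypothesis lam_psi_sep : separating lam psi.

Lemma hdist_upd2 (z : hvert q q) j v j' v' :
  hdist (upd z j v) (upd z j' v') <= (j != j').+1.
Proof.
rewrite -(cards2 j j'); apply: hdist_le_card => i; rewrite !inE negb_or !updE.
by case/andP => /negbTE -> /negbTE ->.
Qed.

Lemma lam_line_inj z j : injective (fun v => lam (upd z j v)).
Proof.
move=> v v' /= E; have d := hdist_upd2 z j v j v'; rewrite eqxx in d.
have := lam_psi_sep E (leq_add d (leq_b1 _)) => /(congr1 (fun y : hvert q q => y j)).
by rewrite !updE eqxx.
Qed.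

Lemma psi_line_sep y y' : lam y = lam y' -> hdist y y' <= 2 -> psi y = psi y' -> y = y'.
Proof. by move=> E d psiE; apply: lam_psi_sep; rewrite // psiE eqxx addn0. Qed.

Definition lam_inv z j : 'I_q -> 'I_q := invF (@lam_line_inj z j).

Lemma lam_upd_inv z j t : lam (upd z j (lam_inv z j t)) = t.
Proof. exact: (f_invF (@lam_line_inj z j)). Qed.

Lemma lam_inv_bij z j : bijective (lam_inv z j).
Proof.
exists (fun v => lam (upd z j v)) => v; first exact: lam_upd_inv.
exact: (invF_f (@lam_line_inj z j)).
Qed.

Lemma lam_inv_neq z j t : (lam_inv z j t != z j) = (t != lam z).
Proof. by rewrite -(inj_eq (@lam_line_inj z j)) /= lam_upd_inv upd_id. Qed.

Lemma psi_line_inj z t : t != lam z -> injective (fun j => psi (upd z j (lam_inv z j t))).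
Proof.
move=> tz j j' /= psiE; apply/eqP; apply: contraT => jj'.
have d := hdist_upd2 z j (lam_inv z j t) j' (lam_inv z j' t).
have {}d := leq_trans d (leq_b1 (j != j') : _ < 2).
have := psi_line_sep _ d psiE; rewrite !lam_upd_inv => /(_ erefl).
move/(congr1 (fun y : hvert q q => y j)); rewrite !updE eqxx (negbTE jj') => E.
by move: tz; rewrite -(lam_inv_neq z j) E eqxx.
Qed.

Definition bidx (j : 'I_q) (m : 'I_n) : 'I_(q * n) := mxvec_index j m.

Lemma bidx_bij : bijective (fun jm : 'I_q * 'I_n => bidx jm.1 jm.2).
Proof.
have [g g1 g2] := onT_bij (curry_mxvec_bij q n).
exists g => [[j m]|p]; first exact: (g1 (j, m)).
by rewrite -[RHS](g2 p); case: (g p).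
Qed.

Lemma bidx_eq j m j' m' : (bidx j' m' == bidx j m) = (j' == j) && (m' == m).
Proof.
apply/eqP/andP => [E|[/eqP -> /eqP -> //]].
by case: (bij_inj bidx_bij (x1 := (j', m')) (x2 := (j, m)) E) => -> ->.
Qed.

Definition blk (x : hvert (q * n) q) m : hvert q q := [ffun j => x (bidx j m)].

Definition lamx (x : hvert (q * n) q) : hvert n q := [ffun m => lam (blk x m)].

Lemma blk_upd x j m v i :
  blk (upd x (bidx j m) v) i = if i == m then upd (blk x m) j v else blk x i.
Proof.
case: (eqVneq i m) => [->|im]; apply/ffunP => j'; rewrite !ffunE bidx_eq.
  by rewrite eqxx andbT.
by rewrite (negbTE im) andbF.
Qed.

(* The neighbour of x changing coordinate j of block m so that the lam-value of
   that block becomes t. *)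
Definition nbr x m j t := upd x (bidx j m) (lam_inv (blk x m) j t).

Lemma blk_nbr_eq x m j t : blk (nbr x m j t) m = upd (blk x m) j (lam_inv (blk x m) j t).
Proof. by rewrite blk_upd eqxx. Qed.

Lemma blk_nbr_neq x m j t i : i != m -> blk (nbr x m j t) i = blk x i.
Proof. by rewrite blk_upd => /negbTE ->. Qed.

Lemma lamx_nbr x m j t : lamx (nbr x m j t) = upd (lamx x) m t.
Proof.
apply/ffunP => i; rewrite !ffunE; case: (eqVneq i m) => [->|im].
  by rewrite blk_nbr_eq lam_upd_inv.
by rewrite blk_nbr_neq.
Qed.

Lemma card_adj_nbr x (Q : pred (hvert (q * n) q)) :
  #|[set y | hadj x y & Q y]| =
  \sum_m \sum_(t | t != lamx x m) \sum_j (Q (nbr x m j t) : nat).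
Proof.
rewrite card_adj (reindex _ (onW_bij _ bidx_bij)) /=.
rewrite -(pair_big predT predT (fun j m => \sum_(v | v != x (bidx j m))
  (Q (upd x (bidx j m) v) : nat))) /= exchange_big; apply: eq_bigr => m _.
rewrite [RHS]exchange_big; apply: eq_bigr => j _.
rewrite (reindex (lam_inv (blk x m) j)) /=; last exact: onW_bij (lam_inv_bij _ _).
by apply: eq_bigl => t; rewrite [lamx x m]ffunE -(lam_inv_neq _ j) ffunE.
Qed.

Definition of_blocks (B : 'I_n -> hvert q q) : hvert (q * n) q :=
  [ffun p => mxvec (\matrix_(j, m) B m j) ord0 p].

Lemma blk_of_blocks B m : blk (of_blocks B) m = B m.
Proof. by apply/ffunP => j; rewrite !ffunE mxvecE mxE. Qed.

Lemma lamx_surj s : exists x, lamx x = s.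
Proof.
pose z : hvert q q := [ffun=> ord0].
exists (of_blocks (fun m => upd z ord0 (lam_inv z ord0 (s m)))).
by apply/ffunP => m; rewrite ffunE blk_of_blocks lam_upd_inv.
Qed.

End Blocks.

Lemma eq_ord_max q (c : 'I_q.+1) : (c == ord_max) = (q <= c).
Proof. by rewrite -val_eqE eqn_leq -ltnS ltn_ord. Qed.

Lemma ord2_max (u : 'I_2) : (u == ord_max) = (u != ord0).
Proof. by case: u => [[|[|]] ?]. Qed.

Section Coloring.
Variables n q' k : nat.
Local Notation q := q'.+1.
Variable f : hvert n q -> 'I_2.
Variable P : {set {set hvert n q}}.
Variables lam psi : hvert q q -> 'I_q.
Hypothesis lam_psi_sep : separating lam psi.
Hypothesis P_part : partition P [set s | val (f s) == 0].
Hypothesis P_faces : forall F, F \in P -> is_face k F.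

Local Notation lamx := (lamx lam).
Local Notation lam_inv := (lam_inv lam_psi_sep).
Local Notation nbr := (nbr lam_psi_sep).
Local Notation widen := (widen_ord (leqnSn q)).

Definition dirs s := dirs_of k (pblock P s).

Lemma in_cover s : (s \in cover P) = (f s == ord0).
Proof. by case/and3P: P_part => /eqP -> _ _; rewrite inE. Qed.

Lemma dirsP s : f s == ord0 -> #|dirs s| = k /\ exists v, pblock P s = face (dirs s) v.
Proof. by rewrite -in_cover => /pblock_mem /P_faces /dirs_ofP. Qed.

Lemma in_pblock_col1 s s' : s \in pblock P s' -> f s == ord0.
Proof.
case/and3P: P_part => _ P_triv _ ss'.
by rewrite -in_cover -mem_pblock (same_pblock P_triv ss').
Qed.

Lemma pblock_upd s m t : f s == ord0 -> t != s m ->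
  (upd s m t \in pblock P s) = (m \in dirs s).
Proof.
move=> fs ts; have [_ [v Fv]] := dirsP fs; rewrite Fv face_upd // -Fv mem_pblock.
by rewrite in_cover.
Qed.

Lemma dirs_upd s m t : f s == ord0 -> m \in dirs s -> t != s m ->
  dirs (upd s m t) = dirs s /\ f (upd s m t) == ord0.
Proof.
move=> fs mS ts; have s'S : upd s m t \in pblock P s by rewrite pblock_upd.
case/and3P: P_part => _ P_triv _.
by rewrite /dirs (same_pblock P_triv s'S); split; last exact: in_pblock_col1 s'S.
Qed.

(* [gcol true] and [gcol false] are the colourings g' and g''; [ord_max] is
   colour q+1. *)
Definition gcol (e : bool) x : 'I_q.+1 :=
  let s := lamx x in
  if f s == ord0 then
    widen (\sum_(i | i \notin dirs s) psi (blk x i) +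
           (if e then \sum_(i in dirs s) lam (blk x i) else 0))%R
  else ord_max.

Lemma gcol_lt e x : f (lamx x) == ord0 -> gcol e x < q.
Proof. by move=> fs; rewrite /gcol fs; apply: (ltn_ord (_ : 'I_q)). Qed.

Lemma gcol_nbr_psi e x m t :
  f (upd (lamx x) m t) == ord0 -> m \notin dirs (upd (lamx x) m t) ->
  exists K, forall j,
    gcol e (nbr x m j t) = widen (psi (upd (blk x m) j (lam_inv (blk x m) j t)) + K)%R.
Proof.
set S := dirs _ => fs' mS.
exists (\sum_(i | (i \notin S) && (i != m)) psi (blk x i) +
        (if e then \sum_(i in S) lam (blk x i) else 0))%R => j.
rewrite /gcol lamx_nbr fs' -/S (bigD1 m) //= blk_nbr_eq addrA; congr (widen (_ + _ + _)%R).
  by apply: eq_bigr => i /andP [_ im]; rewrite blk_nbr_neq.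
case: e => //; apply: eq_bigr => i iS; rewrite blk_nbr_neq //.
by apply: contraNneq mS => <-.
Qed.

Lemma gcol_face_false x m j t : f (lamx x) == ord0 -> m \in dirs (lamx x) ->
  t != lamx x m -> gcol false (nbr x m j t) = gcol false x.
Proof.
move=> fs mS tm; have [S' fs'] := dirs_upd fs mS tm.
rewrite /gcol lamx_nbr S' fs' fs; congr (widen (_ + _)%R).
by apply: eq_bigr => i iS; rewrite blk_nbr_neq //; apply: contraNneq iS => ->.
Qed.

Lemma gcol_face_true x m : f (lamx x) == ord0 -> m \in dirs (lamx x) ->
  exists K, gcol true x = widen (K + lamx x m)%R /\
    forall j t, t != lamx x m -> gcol true (nbr x m j t) = widen (K + t)%R.
Proof.
move=> fs mS; set S := dirs _ in mS *.
exists (\sum_(i | i \notin S) psi (blk x i) + \sum_(i in S | i != m) lam (blk x i))%R.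
split=> [|j t tm].
  by rewrite /gcol fs -/S (bigD1 m mS) /= ffunE [X in _ = widen X]addrC addrCA.
have [S' fs'] := dirs_upd fs mS tm.
rewrite /gcol lamx_nbr S' fs' -/S (bigD1 m mS) /= blk_nbr_eq lam_upd_inv.
rewrite addrCA [X in _ = widen X]addrC; congr (widen (_ + (_ + _))%R).
  by apply: eq_bigr => i iS; rewrite blk_nbr_neq //; apply: contraNneq iS => ->.
by apply: eq_bigr => i /andP [_ im]; rewrite blk_nbr_neq.
Qed.


Definition ncount e x m t (c : 'I_q.+1) := \sum_j (gcol e (nbr x m j t) == c : nat).

Lemma ncountE e x m t c (g : 'I_q -> 'I_q.+1) :
  (forall j, gcol e (nbr x m j t) = g j) -> ncount e x m t c = \sum_j (g j == c : nat).
Proof. by move=> gE; apply: eq_bigr => j _; rewrite gE. Qed.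

Definition nadj (D : pred 'I_n) (s : hvert n q) (j : 'I_2) :=
  \sum_(m | D m) \sum_(t | t != s m) (f (upd s m t) == j : nat).

Lemma ncount_off_face e x m t c : t != lamx x m ->
  (f (upd (lamx x) m t) == ord0 -> lamx x \notin pblock P (upd (lamx x) m t)) ->
  ncount e x m t c =
  if c < q then (f (upd (lamx x) m t) == ord0 : nat)
  else q * (f (upd (lamx x) m t) == ord_max).
Proof.
set s' := upd _ m t => tm off; rewrite ord2_max.
case: (boolP (f s' == ord0)) => fs' /=; last first.
  rewrite (ncountE _ (g := fun=> ord_max)); last first.
    by move=> j; rewrite /gcol lamx_nbr -/s' (negbTE fs').
  rewrite sum_nat_const card_ord eq_sym eq_ord_max ltnNge ltnS.
  by case: (c <= q'); rewrite ?muln0 ?muln1.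
have mS' : m \notin dirs s'.
  rewrite -(pblock_upd (s := s') (t := lamx x m)) //; last by rewrite updE eqxx eq_sym.
  by rewrite {1}/s' upd_upd upd_id; apply: off.
have [K gK] := gcol_nbr_psi e fs' mS'.
have tm' : t != lam (blk x m) by move: tm; rewrite ffunE.
rewrite (ncountE _ gK).
rewrite (sum_widen_inj _ (inj_comp (addIr K) (psi_line_inj tm'))).
by case: ltnP; rewrite ?muln0.
Qed.

Lemma sum_ncount_off_face (D : pred 'I_n) e x c :
  (forall m t, D m -> t != lamx x m -> f (upd (lamx x) m t) == ord0 ->
     lamx x \notin pblock P (upd (lamx x) m t)) ->
  \sum_(m | D m) \sum_(t | t != lamx x m) ncount e x m t c =
  if c < q then nadj D (lamx x) ord0 else q * nadj D (lamx x) ord_max.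
Proof.
move=> off; case: ltnP => cq; rewrite /nadj ?big_distrr; apply: eq_bigr => m Dm.
  by apply: eq_bigr => t tm; rewrite ncount_off_face ?cq // => /off; apply.
rewrite big_distrr; apply: eq_bigr => t tm; rewrite ncount_off_face //; last exact: off.
by rewrite ltnNge cq.
Qed.

(* The neighbours of a colour c < q reached through one direction of the face;
   [diag] tells whether c is the colour of the vertex itself. *)
Definition face_gain (e diag : bool) : nat := if e then q * ~~ diag else q' * q * diag.

Lemma sum_ncount_face e x m c : f (lamx x) == ord0 -> m \in dirs (lamx x) ->
  \sum_(t | t != lamx x m) ncount e x m t c = (c < q) * face_gain e (gcol e x == c).
Proof.
move=> fs mS; have sum_neq (N : nat) : \sum_(t | t != lamx x m) N = q' * N.
  by rewrite (eq_bigl (predC1 (lamx x m))) // sum_nat_const cardC1 card_ord.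
have gc_lt : gcol e x == c -> c < q by move/eqP <-; apply: gcol_lt.
case: e gc_lt => gc_lt /=.
  have [K [gx gnb]] := gcol_face_true fs mS.
  rewrite (eq_bigr (fun t => q * (widen (K + t)%R == c))) => [|t tm]; last first.
    by rewrite (ncountE _ (fun j => gnb j t tm)) sum_nat_const card_ord.
  have := sum_widen_inj c (addrI K); rewrite (bigD1 (lamx x m)) //= -gx -big_distrr /=.
  move: (\sum_(t | _) _) => N; case: (gcol true x == c) gc_lt => [/(_ isT) ->|_] /=.
    by rewrite add1n => -[->]; rewrite !muln0.
  by rewrite add0n => <-; rewrite muln1 mulnC.
rewrite (eq_bigr (fun=> q * (gcol false x == c))) => [|t tm]; last first.
  by rewrite (ncountE _ (fun j => gcol_face_false j fs mS tm)) sum_nat_const card_ord.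
rewrite sum_neq mulnA.
by case: (gcol false x == c) gc_lt => [/(_ isT) ->|_]; rewrite /= ?mul1n ?muln0.
Qed.

Lemma nadj_dirs s j : f s == ord0 ->
  nadj predT s j = nadj [pred m | m \notin dirs s] s j + (j == ord0) * (k * q').
Proof.
move=> fs; have [Sk _] := dirsP fs.
rewrite /nadj (bigID [pred m | m \in dirs s]) addnC /=; congr (_ + _).
rewrite (eq_bigr (fun=> q' * (j == ord0))) => [|m mS].
  by rewrite sum_nat_const Sk mulnA mulnC.
rewrite (eq_bigl (predC1 (s m))) // (eq_bigr (fun=> (j == ord0 : nat))) => [|t ts].
  by rewrite sum_nat_const cardC1 card_ord.
by have [_ /eqP ->] := dirs_upd fs mS ts; rewrite eq_sym.
Qed.

Lemma card_adj_gcol_col2 e x c : f (lamx x) != ord0 ->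
  #|[set y | hadj x y & gcol e y == c]| =
  if c < q then nadj predT (lamx x) ord0 else q * nadj predT (lamx x) ord_max.
Proof.
move=> fs; rewrite (card_adj_nbr lam_psi_sep); apply: sum_ncount_off_face => m t _ _ _.
by apply: contra fs => /in_pblock_col1.
Qed.

Lemma card_adj_gcol_col1 e x c : f (lamx x) == ord0 ->
  #|[set y | hadj x y & gcol e y == c]| =
  (if c < q then nadj [pred m | m \notin dirs (lamx x)] (lamx x) ord0
   else q * nadj [pred m | m \notin dirs (lamx x)] (lamx x) ord_max) +
  k * ((c < q) * face_gain e (gcol e x == c)).
Proof.
move=> fs; have [Sk _] := dirsP fs.
rewrite (card_adj_nbr lam_psi_sep) (bigID [pred m | m \in dirs (lamx x)]) [LHS]addnC /=.
congr (_ + _).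
  apply: sum_ncount_off_face => m t /= mS tm fs'; apply/negP => s_s'.
  case/and3P: P_part => _ P_triv _; move: mS.
  by rewrite -(pblock_upd fs tm) (same_pblock P_triv s_s') mem_pblock in_cover fs'.
by rewrite (eq_bigr _ (fun m mS => sum_ncount_face e c fs mS)) sum_nat_const Sk.
Qed.

Hypothesis q'_gt0 : 0 < q'.

Lemma gcol_surj e : (forall j, exists s, f s = j) -> forall c, exists x, gcol e x = c.
Proof.
move=> f_surj c; have [s2 fs2] := f_surj ord_max; have [s1 fs1] := f_surj ord0.
have [cq|qc] := ltnP c q; last first.
  have [x xs2] := lamx_surj lam_psi_sep s2; exists x.
  by rewrite /gcol xs2 fs2; apply/eqP; rewrite eq_sym eq_ord_max.
have fs1' : f s1 == ord0 by rewrite fs1.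
have [m0 m0S] : exists m0, m0 \notin dirs s1.
  apply/existsP; apply: contraT; rewrite negb_exists => /forallP allS.
  have [_ [v Fv]] := dirsP fs1'.
  have : s2 \in pblock P s1.
    by rewrite Fv inE; apply/forall_inP => i iS; move: (allS i); rewrite iS.
  by move/in_pblock_col1; rewrite fs2.
pose t0 : 'I_q := if s1 m0 == ord0 then ord_max else ord0.
have t0s1 : s1 m0 != t0.
  rewrite /t0; case: (eqVneq (s1 m0) ord0) => [->|] //.
  by rewrite eq_ord_max -ltnNge.
have [x xs] := lamx_surj lam_psi_sep (upd s1 m0 t0).
have s'E : upd (lamx x) m0 (s1 m0) = s1 by rewrite xs upd_upd upd_id.
have : ncount e x m0 (s1 m0) c = 1.
  rewrite ncount_off_face; first by rewrite s'E fs1 cq.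
    by rewrite xs updE eqxx.
  by rewrite s'E xs => _; rewrite pblock_upd // eq_sym.
rewrite /ncount; case: (pickP [pred j | gcol e (nbr x m0 j (s1 m0)) == c]) => [j /eqP|none].
  by exists (nbr x m0 j (s1 m0)).
by rewrite big1 // => j _; move: (none j) => /= ->.
Qed.

Lemma gcol_perfect e (a b c d dg off : int) :
  perfect_coloring f (mat2 a b c d) ->
  (dg + Posz (k * q') = a + Posz (k * face_gain e true))%R ->
  (off + Posz (k * q') = a + Posz (k * face_gain e false))%R ->
  perfect_coloring (gcol e) (qmat q dg off (Posz q * b) c (Posz q * d))%R.
Proof.
move=> [f_surj f_count] dgE offE; split; first exact: gcol_surj.
move=> x j; set s := lamx x.
have nadjE j2 : (nadj predT s j2 : int) = mat2 a b c d (f s) j2.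
  by rewrite -f_count card_adj.
rewrite /qmat; case: (boolP (f s == ord0)) => fs.
  have fs0 : (val (f s) == 0) = true := fs.
  have := nadjE ord0; have := nadjE ord_max.
  rewrite /mat2 fs0 /= !nadj_dirs // card_adj_gcol_col1 // -/s gcol_lt //=.
  by case: ltnP => jq /=; [case: (gcol e x == j) | ]; lia.
have fs0 : (val (f s) == 0) = false := negbTE fs.
have gx : gcol e x = ord_max by rewrite /gcol -/s (negbTE fs).
have := nadjE ord0; have := nadjE ord_max.
rewrite card_adj_gcol_col2 // -/s gx /= ltnn /mat2 fs0 /=.
by case: ltnP; lia.
Qed.

End Coloring.

Local Open Scope ring_scope.

Theorem lemma9 (n q k : nat) (f : hvert n q -> 'I_2) (a b c d : int) :
  perfect_coloring f (mat2 a b c d) ->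
  (exists P : {set {set hvert n q}},
      partition P [set x | val (f x) == 0%N] /\
      (forall F, F \in P -> is_face k F)) ->
  (exists C : {set hvert q.+1 q}, one_perfect_code C) ->
  exists (g' g'' : hvert (q * n)%N q -> 'I_q.+1),
    perfect_coloring g'
      (qmat q (a - k%:Z * (q%:Z - 1)) (a + k%:Z)
              (q%:Z * b) c (q%:Z * d)) /\
    perfect_coloring g''
      (qmat q (a + k%:Z * (q%:Z - 1) ^+ 2) (a - k%:Z * (q%:Z - 1))
              (q%:Z * b) c (q%:Z * d)).
Proof.
move=> f_col [P [P_part P_faces]] [C C_perfect].
have [[x0 fx0] [x1 fx1]] := (f_col.1 ord0, f_col.1 ord_max).
have q_gt1 : (1 < q)%N.
  by apply: (@hvert_neq_gt1 n q x0 x1); apply/eqP => x01; move: fx1; rewrite -x01 fx0.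
destruct q as [|q']; first by [].
have [lam [psi sep]] := perfect_code_separating C_perfect.
have gcolP e := gcol_perfect sep P_part P_faces q_gt1 (e := e) f_col.
exists (gcol k f P lam psi true), (gcol k f P lam psi false).
by split; apply: gcolP; rewrite /face_gain /=; lia.
Qed.
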